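(* Let $(L,d)$ be a metric locale without isolated points. Then the Booleanization $B_L=\{a\in L\mid a=a^{**}\}$ of $L$ coincides with the DeMorganization $M_L$ of $L$, i.e. $B_L=M_L$.
   Context: A frame (locale) $L$ is a complete lattice in which finite meets distribute over arbitrary joins; $a\to b$ denotes the Heyting implication (right adjoint to $a\wedge -$) and $a^*=a\to 0$ the pseudocomplement. A sublocale of $L$ is a subset $S\subseteq L$ closed under arbitrary meets (in particular $1\in S$) such that $a\to s\in S$ for all $a\in L$, $s\in S$; a sublocale is itself a frame under the inherited order. A sublocale $S$ is dense if $\bigwedge S=0$. A locale is extremally disconnected if $a^*\vee a^{**}=1$ for all $a$. For $a\in L$ the open sublocale is $\mathfrak{o}(a)=\{a\to b\mid b\in L\}$. The DeMorganization $M_L$ of $L$ is the largest dense extremally disconnected sublocale of $L$; explicitly $M_L=\bigcap_{a\in L}\mathfrak{o}(a^*\vee a^{**})$. A diameter on $L$ is a map $d\colon L\to[0,+\infty]$ with (D1) $d(0)=0$; (D2) $a\le b\Rightarrow d(a)\le d(b)$; (D3) $a\wedge b\neq 0\Rightarrow d(a\vee b)\le d(a)+d(b)$; (D4) for every $\varepsilon>0$, $\bigvee\{a\in L\mid d(a)<\varepsilon\}=1$. Write $b\lhd_\varepsilon a$ if for every $c\in L$ with $d(c)<\varepsilon$, $c\wedge b\ne0$ implies $c\le a$. The diameter is admissible if $a=\bigvee\{b\in L\mid b\lhd_\varepsilon a \text{ for some }\varepsilon>0\}$ for all $a\in L$; a metric locale is a pair $(L,d)$ with $d$ an admissible diameter.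 A point of $L$ is $p\ne1$ such that $a\wedge b\le p$ implies $a\le p$ or $b\le p$; it is isolated if the sublocale $\{1,p\}$ is an open sublocale $\mathfrak{o}(a)$ for some $a$. *)

From Stdlib Require Import Reals.
From Coquelicot Require Import Rbar.
Open Scope R_scope.

Record Frame := {
  carrier :> Type;
  fle : carrier -> carrier -> Prop;
  fle_refl : forall a, fle a a;
  fle_trans : forall a b c, fle a b -> fle b c -> fle a c;
  fle_antisym : forall a b, fle a b -> fle b a -> a = b;
  fsup : (carrier -> Prop) -> carrier;
  fsup_ub : forall (S : carrier -> Prop) a, S a -> fle a (fsup S);
  fsup_least : forall (S : carrier -> Prop) b,
      (forall a, S a -> fle a b) -> fle (fsup S) b;
  fmeet : carrier -> carrier -> carrier;
  fmeet_lb1 : forall a b, fle (fmeet a b) a;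
  fmeet_lb2 : forall a b, fle (fmeet a b) b;
  fmeet_glb : forall a b c, fle c a -> fle c b -> fle c (fmeet a b);
  fdistr : forall a (S : carrier -> Prop),
      fmeet a (fsup S) = fsup (fun c => exists s, S s /\ c = fmeet a s)
}.

Section FrameOps.
Variable L : Frame.

Definition ftop : L := fsup L (fun _ => True).
Definition fbot : L := fsup L (fun _ => False).
Definition fjoin (a b : L) : L := fsup L (fun c => c = a \/ c = b).
Definition finf (S : L -> Prop) : L :=
  fsup L (fun c => forall s, S s -> fle L c s).
Definition fimp (a b : L) : L := fsup L (fun c => fle L (fmeet L a c) b).
Definition pcompl (a : L) : L := fimp a fbot.

Definition sublocale (S : L -> Prop) : Prop :=
  (forall T : L -> Prop, (forall x, T x -> S x) -> S (finf T)) /\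
  (forall a s, S s -> S (fimp a s)).

Definition open_sub (a : L) : L -> Prop := fun x => exists b, x = fimp a b.

Definition booleanization : L -> Prop := fun a => a = pcompl (pcompl a).

Definition demorganization : L -> Prop :=
  fun x => forall a, open_sub (fjoin (pcompl a) (pcompl (pcompl a))) x.

Definition is_point (p : L) : Prop :=
  p <> ftop /\
  forall a b, fle L (fmeet L a b) p -> fle L a p \/ fle L b p.

Definition isolated_point (p : L) : Prop :=
  is_point p /\
  exists a, forall x, (x = ftop \/ x = p) <-> open_sub a x.

Definition diameter (d : L -> Rbar) : Prop :=
  (forall a, Rbar_le (Finite 0) (d a)) /\
  d fbot = Finite 0 /\
  (forall a b, fle L a b -> Rbar_le (d a) (d b)) /\
  (forall a b, fmeet L a b <> fbot ->
      Rbar_le (d (fjoin a b)) (Rbar_plus (d a) (d b))) /\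
  (forall eps : R, 0 < eps ->
      fsup L (fun a => Rbar_lt (d a) (Finite eps)) = ftop).

Definition well_inside (d : L -> Rbar) (eps : R) (b a : L) : Prop :=
  forall c, Rbar_lt (d c) (Finite eps) -> fmeet L c b <> fbot -> fle L c a.

Definition admissible (d : L -> Rbar) : Prop :=
  forall a, a = fsup L (fun b => exists eps : R, 0 < eps /\ well_inside d eps b a).

Definition metric_diameter (d : L -> Rbar) : Prop :=
  diameter d /\ admissible d.

End FrameOps.

(* Regular elements lie in M_L because c ⇒ x = x whenever c is dense (c^* = 0)
   and x = x^**, and every a^* ∨ a^** is dense.  Conversely, for x in M_L it
   suffices to find disjoint a, a' that both meet every w ≤ x^** with w ≰ x:
   then x^** ∧ a^* ≤ x and x^** ∧ a^** ≤ x, and x ∈ o(c) for the dense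
   c = a^* ∨ a^** yields x^** ≤ x.
   Take a maximal disjoint family (Zorn) of nonzero e with d(e) < η/2 and
   e ◁_η x, split each member into two disjoint nonzero parts and join the
   first parts into a, the second ones into a'.  Splitting is possible
   because, by admissibility, an element without such a splitting is an atom,
   and the pseudocomplement of an atom is an isolated point.  Given such a w,
   admissibility and (D4) yield a small g ≤ w with g ≰ x, and then a tiny
   candidate c meeting g; by the triangle inequality (D3) any member of the
   family that meets c has diameter below the admissibility scale of w,
   hence lies below w. *)

From Stdlib Require Import Reals Lra Classical ClassicalEpsilon.
From Coquelicot Require Import Rbar.
From mathcomp Require classical_sets.

Local Notation "a ⊑ b" := (fle _ a b) (at level 70).
Local Notation "a ⊓ b" := (fmeet _ a b) (at level 40, left associativity).
Local Notation "a ⊔ b" := (fjoin _ a b) (at level 50, left associativity).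
Local Notation "a ⇒ b" := (fimp _ a b) (at level 55, right associativity).
Local Notation "a ^*" := (pcompl _ a) (at level 2, left associativity, format "a ^*").
Local Notation "a ^**" := (pcompl _ (pcompl _ a)) (at level 2, left associativity, format "a ^**").
Local Notation "⊥" := (fbot _).
Local Notation "⊤" := (ftop _).

Section FrameFacts.
Variable L : Frame.
Implicit Types a b c e u w x y z : L.

Lemma fbot_le a : ⊥ ⊑ a.
Proof. apply fsup_least; intros z []. Qed.

Lemma fle_top a : a ⊑ ⊤.
Proof. now apply fsup_ub. Qed.

Lemma fle_bot a : a ⊑ ⊥ -> a = ⊥.
Proof. intro H; apply fle_antisym; [exact H | apply fbot_le]. Qed.

Lemma fle_neq_bot a b : a ⊑ b -> a <> ⊥ -> b <> ⊥.
Proof. intros Hab Ha ->; apply Ha, fle_bot, Hab. Qed.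

Lemma fjoin_ub_l a b : a ⊑ a ⊔ b.
Proof. apply fsup_ub; now left. Qed.

Lemma fjoin_ub_r a b : b ⊑ a ⊔ b.
Proof. apply fsup_ub; now right. Qed.

Lemma fjoin_lub a b c : a ⊑ c -> b ⊑ c -> a ⊔ b ⊑ c.
Proof. intros Ha Hb; apply fsup_least; now intros z [-> | ->]. Qed.

Lemma fmeet_comm a b : a ⊓ b = b ⊓ a.
Proof. apply fle_antisym; apply fmeet_glb; apply fmeet_lb2 || apply fmeet_lb1. Qed.

Lemma fmeet_id a : a ⊓ a = a.
Proof. apply fle_antisym; [apply fmeet_lb1 | apply fmeet_glb; apply fle_refl]. Qed.

Lemma fmeet_mono a b a' b' : a ⊑ a' -> b ⊑ b' -> a ⊓ b ⊑ a' ⊓ b'.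
Proof.
  intros Ha Hb; apply fmeet_glb.
  - eapply fle_trans; [apply fmeet_lb1 | exact Ha].
  - eapply fle_trans; [apply fmeet_lb2 | exact Hb].
Qed.

Lemma fmeet_top a : a ⊓ ⊤ = a.
Proof. apply fle_antisym; [apply fmeet_lb1 | apply fmeet_glb; [apply fle_refl | apply fle_top]]. Qed.

Lemma fmeet_join_distr a b c : a ⊓ (b ⊔ c) = a ⊓ b ⊔ a ⊓ c.
Proof.
  apply fle_antisym.
  - unfold fjoin at 1; rewrite fdistr; apply fsup_least.
    intros z [s [[-> | ->] ->]]; [apply fjoin_ub_l | apply fjoin_ub_r].
  - apply fjoin_lub; apply fmeet_mono; auto using fle_refl, fjoin_ub_l, fjoin_ub_r.
Qed.

Lemma fmeet_imp a b : a ⊓ (a ⇒ b) ⊑ b.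
Proof.
  unfold fimp; rewrite fdistr; apply fsup_least.
  now intros z [s [Hs ->]].
Qed.

Lemma fimp_adj a b c : a ⊓ c ⊑ b <-> c ⊑ a ⇒ b.
Proof.
  split; intro H.
  - now apply fsup_ub.
  - eapply fle_trans; [apply fmeet_mono; [apply fle_refl | exact H] | apply fmeet_imp].
Qed.

Lemma pcompl_adj a c : a ⊓ c = ⊥ <-> c ⊑ a^*.
Proof.
  unfold pcompl; rewrite <- fimp_adj; split; intro H.
  - rewrite H; apply fle_refl.
  - now apply fle_bot.
Qed.

Lemma fmeet_pcompl a : a ⊓ a^* = ⊥.
Proof. apply pcompl_adj, fle_refl. Qed.

Lemma fle_pcompl2 a : a ⊑ a^**.
Proof. apply pcompl_adj; rewrite fmeet_comm; apply fmeet_pcompl. Qed.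

Lemma fsup_neq_bot (S : L -> Prop) : fsup L S <> ⊥ -> exists s, S s /\ s <> ⊥.
Proof.
  intro H; apply NNPP; intro N; apply H, fle_bot, fsup_least.
  intros s Hs; destruct (classic (s = ⊥)) as [-> | Hs0]; [apply fle_refl |].
  exfalso; apply N; now exists s.
Qed.

Lemma fsup_not_le (S : L -> Prop) b : ~ fsup L S ⊑ b -> exists s, S s /\ ~ s ⊑ b.
Proof.
  intro H; apply NNPP; intro N; apply H, fsup_least.
  intros s Hs; apply NNPP; intro Hsb; apply N; now exists s.
Qed.

Lemma fmeet_fsup_neq_bot a (S : L -> Prop) :
  a ⊓ fsup L S <> ⊥ -> exists s, S s /\ a ⊓ s <> ⊥.
Proof.
  rewrite fdistr; intro H.
  destruct (fsup_neq_bot _ H) as [z [[s [Hs ->]] Hz]]; eauto.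
Qed.

Lemma fsup_fmeet_fsup_eq_bot (S T : L -> Prop) :
  (forall s t, S s -> T t -> s ⊓ t = ⊥) -> fsup L S ⊓ fsup L T = ⊥.
Proof.
  intro H; apply fle_bot; rewrite fdistr; apply fsup_least.
  intros z [t [Ht ->]]; rewrite fmeet_comm, fdistr; apply fsup_least.
  intros z [s [Hs ->]]; rewrite fmeet_comm, (H s t Hs Ht); apply fle_refl.
Qed.

End FrameFacts.

Section RegularElements.
Variable L : Frame.
Implicit Types a b c e u w x y z : L.

Lemma pcompl_dense_join a : (a^* ⊔ a^**)^* = ⊥.
Proof.
  apply fle_bot; rewrite <- (fmeet_pcompl L a^**).
  apply fmeet_glb; apply pcompl_adj, fle_bot;
    rewrite <- (fmeet_pcompl L (a^* ⊔ a^**)); apply fmeet_mono;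
    auto using fle_refl, fjoin_ub_l, fjoin_ub_r.
Qed.

Lemma fimp_dense_regular c x : c^* = ⊥ -> x = x^** -> c ⇒ x = x.
Proof.
  intros Hc Hx; apply fle_antisym.
  - rewrite Hx at 2; apply pcompl_adj, fle_bot; rewrite <- Hc.
    apply pcompl_adj, fle_bot; rewrite <- (fmeet_pcompl L x); apply fmeet_glb.
    + eapply fle_trans; [| apply (fmeet_imp L c x)].
      apply fmeet_mono; [apply fle_refl | apply fmeet_lb2].
    + eapply fle_trans; [apply fmeet_lb2 | apply fmeet_lb1].
  - apply fimp_adj, fmeet_lb2.
Qed.

Lemma booleanization_demorganization x : booleanization L x -> demorganization L x.
Proof.
  intros Hx a; exists x; symmetry.
  apply fimp_dense_regular; [apply pcompl_dense_join | exact Hx].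
Qed.

Lemma demorganization_le x a z :
  demorganization L x -> z ⊓ a^* ⊑ x -> z ⊓ a^** ⊑ x -> z ⊑ x.
Proof.
  intros HM H1 H2; destruct (HM a) as [b Hb]; set (c := a^* ⊔ a^**) in Hb.
  assert (Hz : z ⊓ c ⊑ c ⇒ b)
    by (rewrite <- Hb; unfold c; rewrite fmeet_join_distr; now apply fjoin_lub).
  rewrite Hb; apply fimp_adj; apply fimp_adj in Hz.
  eapply fle_trans; [| exact Hz].
  apply fmeet_glb; [apply fmeet_lb1 | rewrite fmeet_comm; apply fle_refl].
Qed.

Lemma regular_of_demorganization x a a' :
  demorganization L x -> a ⊓ a' = ⊥ ->
  (forall w, w ⊑ x^** -> ~ w ⊑ x -> w ⊓ a <> ⊥ /\ w ⊓ a' <> ⊥) ->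
  booleanization L x.
Proof.
  intros HM Haa' Hgap.
  assert (Ha' : a' ⊑ a^*) by now apply pcompl_adj.
  apply fle_antisym; [apply fle_pcompl2 | apply (demorganization_le x a); [exact HM | |]];
    apply NNPP; intro N; destruct (Hgap _ (fmeet_lb1 _ _ _) N) as [Na Na'].
  - apply Na, fle_bot; rewrite <- (fmeet_pcompl L a), fmeet_comm.
    apply fmeet_mono; [apply fle_refl | apply fmeet_lb2].
  - apply Na', fle_bot; rewrite <- (fmeet_pcompl L a^*).
    apply fmeet_glb; [eapply fle_trans; [apply fmeet_lb2 | exact Ha'] |].
    eapply fle_trans; [apply fmeet_lb1 | apply fmeet_lb2].
Qed.

End RegularElements.

Section Splitting.
Variable L : Frame.
Implicit Types a b c e u w x y z : L.

Definition splittable e : Prop :=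
  exists e1 e2, e1 ⊑ e /\ e2 ⊑ e /\ e1 <> ⊥ /\ e2 <> ⊥ /\ e1 ⊓ e2 = ⊥.

Lemma splittable_neq_bot e : splittable e -> e <> ⊥.
Proof. intros (e1 & _ & He1 & _ & He1' & _); exact (fle_neq_bot L _ _ He1 He1'). Qed.

Lemma pcompl_atom_isolated e :
  e <> ⊥ -> (forall u, u ⊑ e -> u <> ⊥ -> u = e) -> isolated_point L e^*.
Proof.
  intros He Hatom.
  assert (Hdich : forall b, e ⊓ b = ⊥ \/ e ⊑ b).
  { intro b; destruct (classic (e ⊓ b = ⊥)) as [E | E]; [now left | right].
    rewrite <- (Hatom _ (fmeet_lb1 L e b) E); apply fmeet_lb2. }
  assert (Hnot : ~ e ⊑ e^*).
  { intro H; apply He; apply pcompl_adj in H; now rewrite fmeet_id in H. }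
  split; [split |].
  - intro E; apply Hnot; rewrite E; apply fle_top.
  - intros a b Hab.
    destruct (Hdich a) as [Ha | Ha]; [left; now apply pcompl_adj |].
    destruct (Hdich b) as [Hb | Hb]; [right; now apply pcompl_adj |].
    exfalso; apply Hnot.
    eapply fle_trans; [apply fmeet_glb; [exact Ha | exact Hb] | exact Hab].
  - exists e; intro x; split.
    + intros [-> | ->].
      * exists ⊤; apply fle_antisym; [apply fimp_adj |]; apply fle_top.
      * now exists ⊥.
    + intros [b ->]; destruct (Hdich b) as [E | E]; [right | left].
      * apply fle_antisym.
        -- apply pcompl_adj, fle_bot; rewrite <- E.
           apply fmeet_glb; [apply fmeet_lb1 | apply fmeet_imp].
        -- apply fimp_adj; rewrite fmeet_pcompl; apply fbot_le.
      * apply fle_antisym; [apply fle_top | apply fimp_adj].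
        eapply fle_trans; [apply fmeet_lb1 | exact E].
Qed.

Lemma exists_maximal_disjoint_family (D : L -> Prop) :
  (forall e, D e -> e <> ⊥) ->
  exists F, (forall e, F e -> D e) /\
    (forall e e', F e -> F e' -> e ⊓ e' <> ⊥ -> e = e') /\
    (forall c, D c -> exists e, F e /\ e ⊓ c <> ⊥).
Proof.
  intro Hnz.
  (* frame disjointness as disjointness of the sets of nonzero elements below *)
  destruct (classical_sets.ex_maximal_disjoint_subcollection
              (fun e u => u <> ⊥ /\ u ⊑ e) D) as [F [HFD HFdisj HFmax]].
  exists F; split; [exact HFD | split].
  - intros e e' He He' Hee'; apply HFdisj; [exact He | exact He' |].
    exists (e ⊓ e'); repeat split; auto using fmeet_lb1, fmeet_lb2.
  - intros c Hc; apply NNPP; intro N.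
    apply (HFmax (fun e => F e \/ e = c)).
    + split; [intros e He; now left |].
      intro HcF; apply N; exists c; split; [apply HcF; now right |].
      rewrite fmeet_id; now apply Hnz.
    + intros e [He | ->]; auto.
    + intros e e' He He' [u [[Hu0 Hue] [_ Hue']]].
      assert (Hee' : e ⊓ e' <> ⊥)
        by exact (fle_neq_bot L _ _ (fmeet_glb L _ _ _ Hue Hue') Hu0).
      destruct He as [He | ->], He' as [He' | ->].
      * apply HFdisj; [exact He | exact He' | now exists u].
      * exfalso; apply N; now exists e.
      * exfalso; apply N; exists e'; now rewrite fmeet_comm.
      * reflexivity.
Qed.

Lemma exists_disjoint_pair_meeting (D : L -> Prop) :
  (forall e, D e -> splittable e) ->
  exists a a', a ⊓ a' = ⊥ /\
    forall c, D c -> exists e, D e /\ e ⊓ c <> ⊥ /\ e ⊓ a <> ⊥ /\ e ⊓ a' <> ⊥.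
Proof.
  intro Hsplit_all.
  destruct (exists_maximal_disjoint_family D) as (F & HFD & HFdisj & HFmax).
  { intros e He; now apply splittable_neq_bot, Hsplit_all. }
  destruct (choice (fun e (p : L * L) => D e ->
              fst p ⊑ e /\ snd p ⊑ e /\ fst p <> ⊥ /\ snd p <> ⊥ /\ fst p ⊓ snd p = ⊥))
    as [h Hh].
  { intro e; destruct (classic (D e)) as [He | He].
    - destruct (Hsplit_all e He) as (e1 & e2 & Hsplit); now exists (e1, e2).
    - now exists (e, e). }
  exists (fsup L (fun z => exists e, F e /\ z = fst (h e))),
         (fsup L (fun z => exists e, F e /\ z = snd (h e))).
  split.
  - apply fsup_fmeet_fsup_eq_bot; intros s t [e [He ->]] [e' [He' ->]].
    destruct (Hh e (HFD e He)) as (H1 & _ & _ & _ & H12).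
    destruct (Hh e' (HFD e' He')) as (_ & H2' & _ & _ & _).
    destruct (classic (e ⊓ e' = ⊥)) as [E | E].
    + apply fle_bot; rewrite <- E; now apply fmeet_mono.
    + now rewrite <- (HFdisj e e' He He' E).
  - intros c Hc; destruct (HFmax c Hc) as [e [He Hec]].
    destruct (Hh e (HFD e He)) as (H1 & H2 & H1' & H2' & _).
    exists e; repeat split; [now apply HFD | exact Hec | |].
    + apply (fle_neq_bot L (fst (h e))); [| exact H1'].
      apply fmeet_glb; [exact H1 | apply fsup_ub; now exists e].
    + apply (fle_neq_bot L (snd (h e))); [| exact H2'].
      apply fmeet_glb; [exact H2 | apply fsup_ub; now exists e].
Qed.

End Splitting.

Section Diameter.
Variables (L : Frame) (d : L -> Rbar).
Hypothesis HD : diameter L d.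
Implicit Types a b c e u w x y z : L.

Lemma diam_mono a b : a ⊑ b -> Rbar_le (d a) (d b).
Proof. destruct HD as (_ & _ & D2 & _); apply D2. Qed.

Lemma diam_join_lt a b (r s : R) :
  a ⊓ b <> ⊥ -> Rbar_lt (d a) r -> Rbar_lt (d b) s -> Rbar_lt (d (a ⊔ b)) (r + s).
Proof.
  destruct HD as (_ & _ & _ & D3 & _); intros Hab Ha Hb.
  eapply Rbar_le_lt_trans; [now apply D3 | exact (Rbar_plus_lt_compat _ _ _ _ Ha Hb)].
Qed.

Lemma diam_cover_le (eps : R) a b :
  0 < eps -> (forall c, Rbar_lt (d c) eps -> a ⊓ c ⊑ b) -> a ⊑ b.
Proof.
  destruct HD as (_ & _ & _ & _ & D4); intros Heps H.
  rewrite <- (fmeet_top L a), <- (D4 eps Heps), fdistr.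
  apply fsup_least; intros z [c [Hc ->]]; auto.
Qed.

Lemma diam_cover_not_le (eps : R) a b :
  0 < eps -> ~ a ⊑ b -> exists c, Rbar_lt (d c) eps /\ ~ a ⊓ c ⊑ b.
Proof.
  intros Heps Hab; apply NNPP; intro N; apply Hab, (diam_cover_le eps); [exact Heps |].
  intros c Hc; apply NNPP; intro Hcb; apply N; now exists c.
Qed.

Lemma well_inside_le (eps : R) b a : 0 < eps -> well_inside L d eps b a -> b ⊑ a.
Proof.
  intros Heps H; apply (diam_cover_le eps); [exact Heps |]; intros c Hc.
  destruct (classic (c ⊓ b = ⊥)) as [E | E].
  - rewrite fmeet_comm, E; apply fbot_le.
  - eapply fle_trans; [apply fmeet_lb2 | now apply H].
Qed.

Lemma well_inside_antimono (eps : R) b b' a :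
  b' ⊑ b -> well_inside L d eps b a -> well_inside L d eps b' a.
Proof.
  intros Hb H c Hc Hcb'; apply H; [exact Hc |].
  eapply fle_neq_bot; [apply fmeet_mono; [apply fle_refl | exact Hb] | exact Hcb'].
Qed.

Lemma well_inside_pcompl_join (eps : R) b a :
  0 < eps -> well_inside L d eps b a -> b^* ⊔ a = ⊤.
Proof.
  intros Heps H; apply fle_antisym; [apply fle_top |].
  destruct HD as (_ & _ & _ & _ & D4); rewrite <- (D4 eps Heps).
  apply fsup_least; intros c Hc; destruct (classic (c ⊓ b = ⊥)) as [E | E].
  - eapply fle_trans; [| apply fjoin_ub_l]; apply pcompl_adj; now rewrite fmeet_comm.
  - eapply fle_trans; [| apply fjoin_ub_r]; now apply H.
Qed.

End Diameter.

Section MetricLocale.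
Variables (L : Frame) (d : L -> Rbar).
Hypotheses (HD : diameter L d) (Hadm : admissible L d).
Implicit Types a b c e u w x y z : L.

Lemma admissible_not_le a y :
  ~ a ⊑ y -> exists b (eps : R), 0 < eps /\ well_inside L d eps b a /\ ~ b ⊑ y.
Proof.
  rewrite (Hadm a) at 1; intro H.
  destruct (fsup_not_le L _ _ H) as [b [[eps [Heps Hb]] Hby]]; eauto.
Qed.

Lemma admissible_meet a y :
  y ⊓ a <> ⊥ -> exists b (eps : R), 0 < eps /\ well_inside L d eps b a /\ y ⊓ b <> ⊥.
Proof.
  rewrite (Hadm a) at 1; intro H.
  destruct (fmeet_fsup_neq_bot L _ _ H) as [b [[eps [Heps Hb]] Hyb]]; eauto.
Qed.

Lemma atom_of_irreducible e :
  (forall u v, u ⊑ e -> v ⊑ e -> u <> ⊥ -> v <> ⊥ -> u ⊓ v <> ⊥) ->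
  forall u, u ⊑ e -> u <> ⊥ -> u = e.
Proof.
  intros Hirr u Hue Hu; apply fle_antisym; [exact Hue |].
  rewrite <- (fmeet_top L u), fmeet_comm in Hu.
  destruct (admissible_meet u ⊤ Hu) as (b & eps & Heps & Hbu & Hb).
  rewrite fmeet_comm, fmeet_top in Hb.
  assert (Hbe : b ⊑ e)
    by (eapply fle_trans; [exact (well_inside_le L d HD eps b u Heps Hbu) | exact Hue]).
  assert (Heb : e ⊓ b^* = ⊥).
  { apply NNPP; intro N; apply (Hirr _ _ (fmeet_lb1 _ _ _) Hbe N Hb), fle_bot.
    rewrite <- (fmeet_pcompl L b), fmeet_comm.
    apply fmeet_mono; [apply fle_refl | apply fmeet_lb2]. }
  rewrite <- (fmeet_top L e), <- (well_inside_pcompl_join L d HD eps b u Heps Hbu).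
  rewrite fmeet_join_distr, Heb; apply fjoin_lub; [apply fbot_le | apply fmeet_lb2].
Qed.

Definition small_well_inside x e : Prop :=
  e <> ⊥ /\ exists eta : R, 0 < eta /\ Rbar_lt (d e) (eta / 2) /\ well_inside L d eta e x.

Lemma small_well_inside_le x w b g c e (delta : R) :
  well_inside L d delta b w -> g ⊑ b -> ~ g ⊑ x -> Rbar_lt (d g) (delta / 4) ->
  c ⊑ g -> Rbar_lt (d c) (delta / 4) ->
  small_well_inside x e -> e ⊓ c <> ⊥ -> e ⊑ w.
Proof.
  intros Hbw Hgb Hgx Hdg Hcg Hdc [He0 (eta & Heta & Hde & Hex)] Hec.
  apply Hbw.
  - destruct (Rle_or_lt (eta / 2) delta) as [Hle | Hlt].
    + eapply Rbar_lt_le_trans; [exact Hde | exact Hle].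
    + (* otherwise e ⊔ c ⊔ g is small enough to be swallowed by x *)
      exfalso; apply Hgx.
      assert (Hecg : Rbar_lt (d (e ⊔ c ⊔ g)) (eta / 2 + delta / 4 + delta / 4)).
      { apply diam_join_lt; [exact HD | | now apply diam_join_lt | exact Hdg].
        apply (fle_neq_bot L c); [apply fmeet_glb; [apply fjoin_ub_r | exact Hcg] |].
        intro E; apply Hec, fle_bot; rewrite <- E; apply fmeet_lb2. }
      eapply fle_trans; [apply fjoin_ub_r | apply Hex].
      * eapply Rbar_lt_le_trans; [exact Hecg | simpl; lra].
      * apply (fle_neq_bot L e); [| exact He0].
        apply fmeet_glb; [eapply fle_trans; apply fjoin_ub_l | apply fle_refl].
  - eapply fle_neq_bot; [| exact Hec]; apply fmeet_mono; [apply fle_refl |].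
    eapply fle_trans; [exact Hcg | exact Hgb].
Qed.

Lemma exists_small_well_inside_trap x w :
  w ⊑ x^** -> ~ w ⊑ x ->
  exists c, small_well_inside x c /\
    forall e, small_well_inside x e -> e ⊓ c <> ⊥ -> e ⊑ w.
Proof.
  intros Hw Hwx.
  destruct (admissible_not_le w x Hwx) as (b & delta & Hdelta & Hbw & Hbx).
  destruct (diam_cover_not_le L d HD (delta / 4) b x) as (c0 & Hc0 & Hgx); [lra | exact Hbx |].
  set (g := b ⊓ c0) in Hgx.
  assert (Hgb : g ⊑ b) by apply fmeet_lb1.
  assert (Hdg : Rbar_lt (d g) (delta / 4))
    by (eapply Rbar_le_lt_trans; [apply (diam_mono L d HD), fmeet_lb2 | exact Hc0]).
  assert (Hgx_meet : g ⊓ x <> ⊥).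
  { intro E; apply Hgx; rewrite fmeet_comm in E; apply pcompl_adj in E.
    assert (Hg : g ⊑ x^**).
    { eapply fle_trans; [exact Hgb |].
      eapply fle_trans; [exact (well_inside_le L d HD delta b w Hdelta Hbw) | exact Hw]. }
    eapply fle_trans; [apply (fmeet_glb L _ _ _ E Hg) |].
    rewrite fmeet_pcompl; apply fbot_le. }
  destruct (admissible_meet x g Hgx_meet) as (e' & eta & Heta & He'x & Hge').
  destruct (diam_cover_not_le L d HD (Rmin (delta / 4) (eta / 2)) (g ⊓ e') ⊥)
    as (c1 & Hc1 & Hc); [now apply Rmin_glb_lt; lra | intro E; now apply Hge', fle_bot |].
  set (c := g ⊓ e' ⊓ c1) in Hc.
  assert (Hdc : Rbar_lt (d c) (Rmin (delta / 4) (eta / 2)))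
    by (eapply Rbar_le_lt_trans; [apply (diam_mono L d HD), fmeet_lb2 | exact Hc1]).
  exists c; split.
  - split; [intro E; apply Hc; rewrite E; apply fle_refl |].
    exists eta; repeat split; [exact Heta | |].
    + eapply Rbar_lt_le_trans; [exact Hdc | apply Rmin_r].
    + apply (well_inside_antimono L d eta e'); [| exact He'x].
      eapply fle_trans; [apply fmeet_lb1 | apply fmeet_lb2].
  - intros e He Hec; apply (small_well_inside_le x w b g c e delta); auto.
    + eapply fle_trans; apply fmeet_lb1.
    + eapply Rbar_lt_le_trans; [exact Hdc | apply Rmin_l].
Qed.

Hypothesis Hnoiso : forall p : L, ~ isolated_point L p.

Lemma metric_splittable e : e <> ⊥ -> splittable L e.
Proof.
  intro He; apply NNPP; intro Hns; apply (Hnoiso e^*), pcompl_atom_isolated; [exact He |].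
  apply atom_of_irreducible; intros u v Hu Hv Hu0 Hv0 E.
  apply Hns; exists u, v; tauto.
Qed.

Lemma exists_disjoint_pair_gap x :
  exists a a', a ⊓ a' = ⊥ /\
    forall w, w ⊑ x^** -> ~ w ⊑ x -> w ⊓ a <> ⊥ /\ w ⊓ a' <> ⊥.
Proof.
  destruct (exists_disjoint_pair_meeting L (small_well_inside x)) as (a & a' & Haa' & Hmeet).
  { intros e [He _]; now apply metric_splittable. }
  exists a, a'; split; [exact Haa' |]; intros w Hw Hwx.
  destruct (exists_small_well_inside_trap x w Hw Hwx) as (c & Hc & Htrap).
  destruct (Hmeet c Hc) as (e & He & Hec & Hea & Hea').
  assert (Hew : e ⊑ w) by now apply Htrap.
  split; eapply fle_neq_bot; [| exact Hea | | exact Hea'];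
    apply fmeet_mono; [exact Hew | apply fle_refl | exact Hew | apply fle_refl].
Qed.

End MetricLocale.

Theorem corollary5p6 (L : Frame) (d : L -> Rbar)
  (Hd : metric_diameter L d)
  (Hnoiso : forall p : L, ~ isolated_point L p) :
  forall x : L, booleanization L x <-> demorganization L x.
Proof.
  intro x; split; [apply booleanization_demorganization |].
  intro HM; destruct Hd as [HD Hadm].
  destruct (exists_disjoint_pair_gap L d HD Hadm Hnoiso x) as (a & a' & Haa' & Hgap).
  exact (regular_of_demorganization L x a a' HM Haa' Hgap).
Qed.
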